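(* Let $t_n>0$ be a sequence with $t_n\to 0$ and put $r_n=1/t_n$. For each $n$ let $(x_n,y_n,z_n)$ be a point of the model $\mathcal H_{t_n}$ of hyperbolic space described in the context, and let $C_n\subset\mathcal X_{t_n}$ be the corresponding curve, written in the form $$a^{00}_n+a^{10}_n\zeta-\tfrac{1}{t_n}\eta+a^{11}_n\zeta\eta=0 .$$ Suppose that $a^{00}_n$, $a^{11}_n$ and $a^{10}_n-1/t_n$ have finite limits $A^{00}$, $A^{11}$, $A^{10}$ respectively. Then $(x_n,y_n,z_n)$ converges in $\mathbb R^3$ to a point $(x,y,z)$, and $(x,y,z)$ is the point of Euclidean $\mathbb R^3$ whose associated curve in $\mathcal X_0=T\mathbb P^1$ is $w=A^{00}+A^{10}\zeta+A^{11}\zeta^2$.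
   Context: The complex 3-manifold $\mathcal X$ is obtained by gluing $U_0=\{(\zeta,w,t)\in\mathbb C^3:\ |\zeta|^2+tw\bar\zeta+1\neq0\}$ and $U_1=\{(\tilde\zeta,\tilde w,\tilde t)\in\mathbb C^3:\ |\tilde\zeta|^2+\tilde t\tilde w\bar{\tilde\zeta}+1\neq 0\}$ over $\zeta,\tilde\zeta\ne0$, $\zeta+tw\neq0$, $\tilde\zeta+\tilde t\tilde w\neq0$, via $\tilde\zeta=1/\zeta$, $\tilde w=-w/((\zeta+tw)\zeta)$, $\tilde t=t$. Let $\pi:\mathcal X\to\mathbb C$, $\pi(\zeta,w,t)=t$, and $\mathcal X_t=\pi^{-1}(t)$. Then $\mathcal X_0=T\mathbb P^1$ with $\zeta$ the affine coordinate on $\mathbb P^1$ and $w$ the fibre coordinate of $w\,\partial/\partial\zeta$. For $t\neq0$ put $\eta=\zeta+tw$ (and $\tilde\eta=\tilde\zeta+t\tilde w=1/\eta$); then $(\zeta,\eta)$ identify $\mathcal X_t$ with $\mathbb P^1\times\mathbb P^1-\overline\Delta$, where $\overline\Delta=\{(\zeta,-1/\bar\zeta)\}$ is the antidiagonal. The real structure is $\sigma(\zeta,w,t)=\bigl(-1/(\bar\zeta+\bar t\bar w),\ -\bar w/((\bar\zeta+\bar t\bar w)\bar\zeta),\ \bar t\bigr)$, i.e. $\sigma(\zeta,\eta,t)=(-1/\bar\eta,-1/\bar\zeta,\bar t)$ for $t\ne0$. For $t>0$ and $r=1/t$, let $\mathcal H_t=\{(x,y,z)\in\mathbb R^3: z>-r\}$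 with metric $\frac{r^2}{(z+r)^2}(dx^2+dy^2+dz^2)$ (a hyperbolic space of constant curvature determined by $t$, tending to Euclidean $\mathbb R^3$ as $t\to0$). The point $(x,y,z)\in\mathcal H_t$ corresponds to the $\sigma$-invariant $(1,1)$-curve in $\mathcal X_t$ $$(x+iy)+2z\zeta-(x-iy)\zeta\eta+r(\zeta-\eta)+\frac{x^2+y^2+z^2}{r}\zeta=0 .$$ A point $(x,y,z)$ of Euclidean $\mathbb R^3$ corresponds to the curve $w=(x+iy)+2z\zeta-(x-iy)\zeta^2$ in $T\mathbb P^1=\mathcal X_0$. *)

From Stdlib Require Import Reals.
Open Scope R_scope.

(* complex numbers a + i b as (a, b) *)
Definition Cx : Type := (R * R)%type.
Definition RtoC (a : R) : Cx := (a, 0).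
Definition Cadd (u v : Cx) : Cx := (fst u + fst v, snd u + snd v).
Definition Copp (u : Cx) : Cx := (- fst u, - snd u).
Definition Csub (u v : Cx) : Cx := Cadd u (Copp v).
Definition Cmul (u v : Cx) : Cx :=
  (fst u * fst v - snd u * snd v, fst u * snd v + snd u * fst v).

Definition Cconv (u : nat -> Cx) (l : Cx) : Prop :=
  Un_cv (fun n => fst (u n)) (fst l) /\ Un_cv (fun n => snd (u n)) (snd l).

(* Left-hand side of the equation of the sigma-invariant (1,1)-curve in X_t
   (coordinates (zeta, eta)) associated to the point (x,y,z) of H_t, r = 1/t:
   (x+iy) + 2 z zeta - (x-iy) zeta eta + r (zeta - eta)
          + (x^2+y^2+z^2)/r zeta *)
Definition hyp_curve (t x y z : R) (zeta eta : Cx) : Cx :=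
  let r := / t in
  Cadd (Cadd (Cadd (Cadd ((x, y)) (Cmul (RtoC (2 * z)) zeta))
                   (Copp (Cmul (x, - y) (Cmul zeta eta))))
             (Cmul (RtoC r) (Csub zeta eta)))
       (Cmul (RtoC ((x * x + y * y + z * z) / r)) zeta).

(* Right-hand side w(zeta) of the curve w = (x+iy) + 2 z zeta - (x-iy) zeta^2
   in T P^1 = X_0 associated to the point (x,y,z) of Euclidean R^3. *)
Definition euc_curve (x y z : R) (zeta : Cx) : Cx :=
  Cadd (Cadd ((x, y)) (Cmul (RtoC (2 * z)) zeta))
       (Copp (Cmul (x, - y) (Cmul zeta zeta))).

Definition normal_form (t : R) (a00 a10 a11 zeta eta : Cx) : Cx :=
  Cadd (Cadd (Cadd a00 (Cmul a10 zeta)) (Copp (Cmul (RtoC (/ t)) eta)))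
       (Cmul a11 (Cmul zeta eta)).

From Stdlib Require Import Reals Lra.
Open Scope R_scope.

(* Write p = x + i y and q = x^2 + y^2 for a point of H_t.
   1. Comparing coefficients of the monomials 1, zeta, eta, zeta*eta in
      the curve equation gives a00 = p, a11 = -conj p and
      a10 - 1/t = w with w = 2 z + t (q + z^2) real.
   2. For a point of H_t we have 1 + t z > 0, so z is the root of the
      quadratic t z^2 + 2 z + (t q - w) = 0 on that branch:
      z = (w - t q) / (1 + sqrt (1 - t^2 q + t w)).
   3. Hence x_n -> Re A00, y_n -> Im A00, and, since t_n -> 0, the root
      formula gives z_n -> Re A10 / 2; the remaining coefficient limits
      force Im A10 = 0 and A11 = -conj A00.
   4. The Euclidean curve of (X, Y, Z) is w = p + 2 Z zeta - conj p zeta^2,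
      whose coefficients are exactly A00, A10, A11. *)

Lemma Un_cv_const (c : R) : Un_cv (fun _ => c) c.
Proof.
  intros e He; exists 0%nat; intros n _.
  unfold R_dist; rewrite Rminus_diag, Rabs_R0; exact He.
Qed.

Lemma Un_cv_ext_unique (u v : nat -> R) (l1 l2 : R) :
  (forall n, u n = v n) -> Un_cv u l1 -> Un_cv v l2 -> l1 = l2.
Proof.
  intros Huv Hu Hv; apply UL_sequence with u; [exact Hu|].
  apply Un_cv_ext with v; [intro n; symmetry; apply Huv | exact Hv].
Qed.

Lemma hyp_curve_coefficients (t x y z : R) (a00 a10 a11 : Cx) :
  (forall zeta eta,
      hyp_curve t x y z zeta eta = normal_form t a00 a10 a11 zeta eta) ->
  a00 = (x, y) /\
  Csub a10 (RtoC (/ t)) = (2 * z + t * (x * x + y * y + z * z), 0) /\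
  a11 = (- x, y).
Proof.
  intros Hcurve.
  destruct a00 as [p00 q00], a10 as [p10 q10], a11 as [p11 q11].
  pose proof (Hcurve (0, 0) (0, 0)) as E1.
  pose proof (Hcurve (1, 0) (0, 0)) as E2.
  pose proof (Hcurve (1, 0) (1, 0)) as E3.
  unfold hyp_curve, normal_form, Csub, Cadd, Cmul, Copp, RtoC in *; simpl in *.
  unfold Rdiv in *; rewrite Rinv_inv in *.
  injection E1; injection E2; injection E3; intros.
  repeat split; f_equal; lra.
Qed.

Lemma hyperbolic_branch (t z : R) : 0 < t -> - / t < z -> 0 < 1 + t * z.
Proof.
  intros Ht Hz.
  apply Rmult_lt_compat_l with (r := t) in Hz; [|exact Ht].
  rewrite Ropp_mult_distr_r_reverse, Rinv_r in Hz; lra.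
Qed.

(* Step 2: on the branch 1 + t z > 0, z is recovered from
   w = 2 z + t (q + z^2) by the (cancellation-free) root formula. *)
Lemma z_root_formula (t q z w : R) :
  0 < 1 + t * z -> w = 2 * z + t * (q + z * z) ->
  z = (w - t * q) / (sqrt (1 - t * t * q + t * w) + 1).
Proof.
  intros Hbranch Hw.
  assert (Hsq : 1 - t * t * q + t * w = (1 + t * z) ^ 2) by (subst w; ring).
  rewrite Hsq, sqrt_pow2 by lra.
  subst w; field; lra.
Qed.

Lemma root_formula_limit (t q w : nat -> R) (Q W : R) :
  Un_cv t 0 -> Un_cv q Q -> Un_cv w W ->
  Un_cv (fun n => (w n - t n * q n) / (sqrt (1 - t n * t n * q n + t n * w n) + 1))
        (W / 2).
Proof.
  intros Ht Hq Hw.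
  set (g := fun u => / (sqrt u + 1)).
  assert (Hg : continuity_pt g 1).
  { apply continuity_pt_inv.
    - apply continuity_pt_plus; [apply continuity_pt_sqrt; lra|].
      apply continuity_pt_const; intros ? ?; reflexivity.
    - rewrite sqrt_1; lra. }
  assert (Hdisc : Un_cv (fun n => 1 - t n * t n * q n + t n * w n) 1).
  { assert (Hlim : Un_cv (fun n => 1 - t n * t n * q n + t n * w n)
                         (1 - 0 * 0 * Q + 0 * W)).
    { apply CV_plus; [apply CV_minus; [apply Un_cv_const|]|];
        repeat apply CV_mult; assumption. }
    replace (1 - 0 * 0 * Q + 0 * W) with 1 in Hlim by ring; exact Hlim. }
  replace (W / 2) with ((W - 0 * Q) * g 1) by (unfold g; rewrite sqrt_1; field).
  apply CV_mult.
  - apply CV_minus; [exact Hw | apply CV_mult; assumption].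
  - exact (continuity_seq g _ 1 Hg Hdisc).
Qed.

Lemma euc_curve_normal_form (X Y Z : R) (zeta : Cx) :
  euc_curve X Y Z zeta
  = Cadd (Cadd (X, Y) (Cmul (2 * Z, 0) zeta)) (Cmul (- X, Y) (Cmul zeta zeta)).
Proof.
  destruct zeta as [u v].
  unfold euc_curve, Cadd, Cmul, Copp, RtoC; simpl; f_equal; ring.
Qed.

Theorem mainTheorem1
  (t x y z : nat -> R) (a00 a10 a11 : nat -> Cx) (A00 A10 A11 : Cx) :
  (forall n, 0 < t n) ->
  Un_cv t 0 ->
  (* (x_n, y_n, z_n) is a point of H_{t_n} *)
  (forall n, - / t n < z n) ->
  (* C_n is written as a00_n + a10_n zeta - (1/t_n) eta + a11_n zeta eta = 0 *)
  (forall n zeta eta,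
      hyp_curve (t n) (x n) (y n) (z n) zeta eta
      = normal_form (t n) (a00 n) (a10 n) (a11 n) zeta eta) ->
  Cconv a00 A00 ->
  Cconv (fun n => Csub (a10 n) (RtoC (/ t n))) A10 ->
  Cconv a11 A11 ->
  exists X Y Z : R,
    Un_cv x X /\ Un_cv y Y /\ Un_cv z Z /\
    (forall zeta : Cx,
        euc_curve X Y Z zeta
        = Cadd (Cadd A00 (Cmul A10 zeta)) (Cmul A11 (Cmul zeta zeta))).
Proof.
  intros Ht Ht0 Hz Hcurve [H00x H00y] [H10x H10y] [H11x H11y].
  pose proof (fun n => hyp_curve_coefficients _ _ _ _ _ _ _ (Hcurve n)) as Hcoef.
  destruct A00 as [X Y], A10 as [W V], A11 as [P S].
  assert (Hx : Un_cv x X).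
  { apply Un_cv_ext with (fun n => fst (a00 n)); [|exact H00x].
    intro n; destruct (Hcoef n) as [-> _]; reflexivity. }
  assert (Hy : Un_cv y Y).
  { apply Un_cv_ext with (fun n => snd (a00 n)); [|exact H00y].
    intro n; destruct (Hcoef n) as [-> _]; reflexivity. }
  set (q := fun n => x n * x n + y n * y n).
  set (w := fun n => fst (Csub (a10 n) (RtoC (/ t n)))).
  assert (Hw : forall n, w n = 2 * z n + t n * (q n + z n * z n)).
  { intro n; unfold w, q; destruct (Hcoef n) as [_ [-> _]]; simpl; ring. }
  assert (Hzlim : Un_cv z (W / 2)).
  { apply Un_cv_ext with
      (fun n => (w n - t n * q n) / (sqrt (1 - t n * t n * q n + t n * w n) + 1)).
    - intro n; symmetry.
      apply z_root_formula; [apply hyperbolic_branch; auto | apply Hw].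
    - apply root_formula_limit with (Q := X * X + Y * Y); [exact Ht0 | | exact H10x].
      apply CV_plus; apply CV_mult; assumption. }
  assert (HV : V = 0).
  { apply (Un_cv_ext_unique (fun n => snd (Csub (a10 n) (RtoC (/ t n)))) (fun _ => 0));
      [|exact H10y|apply Un_cv_const].
    intro n; destruct (Hcoef n) as [_ [-> _]]; reflexivity. }
  assert (HP : P = - X).
  { apply (Un_cv_ext_unique (fun n => fst (a11 n)) (fun n => - x n)); [|exact H11x|].
    - intro n; destruct (Hcoef n) as [_ [_ ->]]; reflexivity.
    - apply CV_opp; exact Hx. }
  assert (HS : S = Y).
  { apply (Un_cv_ext_unique (fun n => snd (a11 n)) y); [|exact H11y|exact Hy].
    intro n; destruct (Hcoef n) as [_ [_ ->]]; reflexivity. }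
  exists X, Y, (W / 2); repeat split; try assumption.
  intro zeta; rewrite euc_curve_normal_form, HV, HP, HS.
  replace (2 * (W / 2)) with W by field; reflexivity.
Qed.
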